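(* Fix a baseline $\mathbf{x}'\in\mathbb{R}^d$. Consider the Baseline Shapley (Bshap) value function $v^B_{\mathbf{x},f,p}(S)=f(\mathbf{x}_S;\mathbf{x}'_{\bar S})$ and the Conditional Expectation (CES) value function $v^C_{\mathbf{x},f,p}(S)=\mathbb{E}_{\mathbf{x}''_{\bar S}\sim p(\mathbf{x}''_{\bar S}\mid \mathbf{x}_S)}[f(\mathbf{x}_S;\mathbf{x}''_{\bar S})]$. For no finite $T$ is Bshap strong $T$-robust to off-manifold perturbations, and for no finite $T$ is CES strong $T$-robust to off-manifold perturbations.
   Context: Here $f:\mathbb{R}^d\to\mathbb{R}$ is a model, $p$ is a probability density on $\mathbb{R}^d$, $\mathbf{x}\in\mathbb{R}^d$ is the explicand, $S\subseteq[d]$, $\bar S=[d]\setminus S$, and $(\mathbf{x}_S;\mathbf{z}_{\bar S})$ denotes the vector whose coordinates in $S$ are those of $\mathbf{x}$ and whose coordinates in $\bar S$ are those of $\mathbf{z}$. A value function $v_{\mathbf{x},f,p}(S)$ is called strong $T$-robust to off-manifold perturbations if for any two models $f_1,f_2$ and any probability measure $p$, the condition $\max_{\mathbf{z}}|f_1(\mathbf{z})-f_2(\mathbf{z})|\,p(\mathbf{z})\le\epsilon$ always entails $|v_{\mathbf{x},f_1,p}(S)-v_{\mathbf{x},f_2,p}(S)|\le T\epsilon$ for every $\mathbf{x}$ and every $S$. *)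

From HB Require Import structures.
From mathcomp Require Import all_boot all_order all_algebra.
From mathcomp Require Import all_classical all_reals all_analysis.

Set Implicit Arguments.
Unset Strict Implicit.
Unset Printing Implicit Defensive.

Import Order.TTheory GRing.Theory Num.Theory.
Local Open Scope classical_set_scope.
Local Open Scope ring_scope.

(* Points of R^d are d-tuples of reals; d.-tuple R carries the product
   (coordinate-generated) sigma-algebra of the library. *)

Section Defs.
Variable R : realType.
Variable d : nat.
Local Notation pt := (d.-tuple R).

Definition splice (x y : pt) (S : {set 'I_d}) : pt :=
  [tuple if j \in S then tnth x j else tnth y j | j < d].

Definition upd (z : pt) (i : 'I_d) (t : R) : pt :=
  [tuple if j == i then t else tnth z j | j < d].

Fixpoint iint (l : seq 'I_d) (g : pt -> \bar R) (z : pt) : \bar R :=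
  match l with
  | [::] => g z
  | i :: l' => (\int[lebesgue_measure]_(t in [set: R]) iint l' g (upd z i t))%E
  end.

Definition is_density (p : pt -> R) : Prop :=
  [/\ measurable_fun [set: pt] p,
      (forall z, 0 <= p z) &
      (forall z0, iint (enum 'I_d) (fun z => (p z)%:E) z0 = 1%E)].

Definition value_fun := pt -> (pt -> R) -> (pt -> R) -> {set 'I_d} -> R.

Definition bshap (x' : pt) : value_fun := fun x f p S => f (splice x x' S).

(* Conditional expectation: 
   E_{x''_{\bar S} ~ p(. | x_S)} f(x_S ; x''_{\bar S})
   = (\int f(x_S;y) p(x_S;y) dy) / (\int p(x_S;y) dy),
   integrals over the coordinates in \bar S. *)
Definition ces : value_fun := fun x f p S =>
  fine (iint (enum (~: S)) (fun z => (f z * p z)%:E) x) /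
  fine (iint (enum (~: S)) (fun z => (p z)%:E) x).

Definition strong_robust (v : value_fun) (T : R) : Prop :=
  forall (f1 f2 p : pt -> R) (eps : R),
    measurable_fun [set: pt] f1 -> measurable_fun [set: pt] f2 ->
    is_density p ->
    (forall z, `|f1 z - f2 z| * p z <= eps) ->
    forall (x : pt) (S : {set 'I_d}), `|v x f1 p S - v x f2 p S| <= T * eps.

End Defs.

From HB Require Import structures.
From mathcomp Require Import all_boot all_order all_algebra.
From mathcomp Require Import all_classical all_reals all_analysis.
Import Order.TTheory GRing.Theory Num.Theory.
Set Implicit Arguments.
Unset Strict Implicit.
Local Open Scope ring_scope.
Local Open Scope classical_set_scope.

(* A constant perturbation f1 - f2 = 1 is small in the off-manifold sense as
   soon as the density is spread out: for the uniform density on [0, k]^d we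
   have |f1 - f2| p <= k^-d.  Both value functions, however, reproduce
   constants (for CES take S = [d] at a point of positive density, where the
   conditional expectation is f(x) itself), so the value changes by 1 while
   eps = k^-d tends to 0. *)

Section ProductDensity.
Variables (R : realType) (d : nat) (h : R -> R).
Hypothesis h_ge0 : forall t, 0 <= h t.
Hypothesis measurable_h : measurable_fun [set: R] h.
Hypothesis integral_h : (\int[lebesgue_measure]_(t in [set: R]) (h t)%:E = 1)%E.

Definition prod_density (z : d.-tuple R) : R := \prod_(j < d) h (tnth z j).

Lemma tnth_upd (z : d.-tuple R) i t j :
  tnth (upd z i t) j = if j == i then t else tnth z j.
Proof. by rewrite tnth_mktuple. Qed.

Lemma iint_prod_density (l : seq 'I_d) z : uniq l ->
  iint l (fun z => (prod_density z)%:E) z =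
  (\prod_(j < d | j \notin l) h (tnth z j))%:E.
Proof.
elim: l z => [|i l IHl] z //= /andP[il ul].
have prod_upd t : \prod_(j < d | j \notin l) h (tnth (upd z i t) j) =
    (\prod_(j < d | j \notin i :: l) h (tnth z j)) * h t.
  rewrite (bigD1 i) //= mulrC tnth_upd eqxx; congr (_ * _).
  apply: eq_big => [j|j /andP[_ ji]]; first by rewrite in_cons negb_or andbC.
  by rewrite tnth_upd (negbTE ji).
under eq_integral do rewrite IHl // prod_upd EFinM.
rewrite ge0_integralZl_EFin ?integral_h ?mule1 //.
- by move=> t _; rewrite lee_fin.
- exact/measurable_realfun.measurable_EFinP.
- exact: prodr_ge0.
Qed.

Lemma prod_density_is_density : is_density prod_density.
Proof.
split=> [|z|z].
- apply: measurable_prod => j _.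
  exact: measurableT_comp measurable_h (measurable_tnth j).
- exact: prodr_ge0.
- rewrite iint_prod_density ?enum_uniq // big_pred0 // => j.
  by rewrite mem_enum.
Qed.

End ProductDensity.

Section UniformBox.
Variables (R : realType) (k : R).
Hypothesis k_gt0 : 0 < k.

Definition uniform (t : R) : R := k^-1 * \1_`[0, k] t.

Lemma uniform_ge0 t : 0 <= uniform t.
Proof. by rewrite mulr_ge0 // invr_ge0 ltW. Qed.

Lemma uniform_le t : uniform t <= k^-1.
Proof.
rewrite /uniform indicE; case: (_ \in _); first by rewrite mulr1.
by rewrite mulr0 invr_ge0 ltW.
Qed.

Lemma measurable_uniform : measurable_fun [set: R] uniform.
Proof.
exact/measurable_realfun.measurable_funM/measurable_realfun.measurable_indic.
Qed.

Lemma integral_uniform :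
  (\int[lebesgue_measure]_(t in [set: R]) (uniform t)%:E = 1)%E.
Proof.
under eq_integral do rewrite EFinM.
rewrite ge0_integralZl_EFin //; last 2 first.
- exact/measurable_realfun.measurable_EFinP/measurable_realfun.measurable_indic.
- by rewrite invr_ge0 ltW.
rewrite integral_indic // setIT.
have := lebesgue_measure_itv `[0, k]%R.
rewrite /= lte_fin k_gt0 sube0 => ->.
by rewrite -EFinM mulVf ?gt_eqF.
Qed.

Variable d : nat.

Definition box_density : d.-tuple R -> R := prod_density uniform.

Lemma box_density_is_density : is_density box_density.
Proof.
exact: prod_density_is_density uniform_ge0 measurable_uniform integral_uniform.
Qed.

Lemma box_density_le z : box_density z <= k^-1 ^+ d.
Proof.
rewrite -[d in k^-1 ^+ d]card_ord -prodr_const.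
by apply: ler_prod => j _; rewrite uniform_ge0 uniform_le.
Qed.

Lemma box_density_gt0 : 0 < box_density [tuple 0 | _ < d].
Proof.
apply: prodr_gt0 => j _; rewrite tnth_mktuple /uniform indicE mem_set.
  by rewrite mulr1 invr_gt0.
by rewrite /= in_itv /= lexx ltW.
Qed.

End UniformBox.
Arguments box_density {R} k d.

Section NotRobust.
Variables (R : realType) (d : nat).
Local Notation pt := (d.-tuple R).

Lemma exists_box_width (T : R) : (0 < d)%N ->
  exists2 k : R, 0 < k & T * k^-1 ^+ d < 1.
Proof.
move=> d_gt0; set k := `|T| + 1.
have k_gt0 : 0 < k by rewrite ltr_pwDr.
exists k => //.
have kV_le1 : k^-1 <= 1 by rewrite invf_le1 // lerDr.
have kVd_le : k^-1 ^+ d <= k^-1.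
  by rewrite -[leRHS]expr1 ler_wiXn2l // invr_ge0 ltW.
have kVd_ge0 : 0 <= k^-1 ^+ d by rewrite exprn_ge0 // invr_ge0 ltW.
apply: (le_lt_trans (ler_wpM2r kVd_ge0 (ler_norm T))).
apply: (le_lt_trans (ler_wpM2l (normr_ge0 T) kVd_le)).
by rewrite -(ltr_pM2r k_gt0) mul1r -mulrA mulVf ?gt_eqF // mulr1 ltrDl.
Qed.

Lemma not_strong_robust (v : value_fun R d) (x : pt) (S : {set 'I_d}) :
  (0 < d)%N ->
  (forall k : R, 0 < k ->
     `|v x (fun=> 1) (box_density k d) S -
       v x (fun=> 0) (box_density k d) S| = 1) ->
  forall T, ~ strong_robust v T.
Proof.
move=> d_gt0 v_cst T robust.
have [k k_gt0 Tk] := exists_box_width T d_gt0.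
have small z : `|1 - 0| * box_density k d z <= k^-1 ^+ d.
  by rewrite subr0 normr1 mul1r box_density_le.
have := robust _ _ _ _ (measurable_cst _) (measurable_cst _)
  (box_density_is_density k_gt0 d) small x S.
by rewrite v_cst // => /le_lt_trans/(_ Tk); rewrite ltxx.
Qed.

Lemma ces_setT (x : pt) (f p : pt -> R) :
  p x != 0 -> ces x f p [set: 'I_d]%SET = f x.
Proof. by move=> px; rewrite /ces finset.setCT enum_set0 /= mulfK. Qed.

End NotRobust.

Theorem proposition2 (R : realType) (d : nat) (x' : d.-tuple R) :
  (0 < d)%N ->
  (forall T : R, ~ strong_robust (bshap x') T) /\
  (forall T : R, ~ strong_robust (@ces R d) T).
Proof.
move=> d_gt0; split.
- apply: (not_strong_robust (x := x') (S := finset.set0) d_gt0) => k _.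
  by rewrite /bshap subr0 normr1.
- apply: (not_strong_robust (x := [tuple 0 | _ < d]) (S := [set: 'I_d]%SET))
    => // k k_gt0.
  by rewrite !ces_setT ?gt_eqF ?box_density_gt0 // subr0 normr1.
Qed.
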